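(* Let $G$ be a graph and let $t=\varphi_r(G)$. If every induced subgraph of $G$ that is a minimal b-$t$-atom is feasible in $G$, then $\varphi(G)=\varphi_r(G)$.
   Context: A proper $k$-coloring of $G$ is a surjective map $c:V(G)\to\{1,\ldots,k\}$ with $c(u)\ne c(v)$ for every edge $uv$. In a proper $k$-coloring, a vertex of color $i$ is a b-vertex if it has a neighbor of every color $j\ne i$. A b-$k$-coloring is a proper $k$-coloring in which every color class contains a b-vertex; $\varphi(G)$ is the largest $k$ such that $G$ has a b-$k$-coloring, and $\varphi_r(G)=\max\{\varphi(H): H\text{ an induced subgraph of }G\}$. A b-$t$-atom is a graph $A$ whose vertex set can be partitioned into $t$ sets $D_1,\ldots,D_t$, each $D_i$ containing a special vertex $c_i$, such that each $D_i$ is independent with $|D_i|\le t$ and, for all $i\ne j$, $c_i$ has a neighbor in $D_j$; it is minimal if no proper induced subgraph of it is a b-$t$-atom. For an induced subgraph $A$ of $G$, $N(A)$ is the set of vertices outside $V(A)$ with a neighbor in $V(A)$. An induced b-$t$-atom $A$ of $G$ is feasible in $G$ if some b-$t$-coloring of $A$ extends to a proper coloring of $V(A)\cup N(A)$ using only colors $\{1,\ldots,t\}$. *)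

(* A graph is a symmetric irreflexive relation e on a finType T.
   Induced subgraphs are represented by vertex subsets S : {set T}.
   Colours are the natural numbers 1..k. *)
From Stdlib Require Import ClassicalEpsilon.
From mathcomp Require Import all_boot.
Set Implicit Arguments. Unset Strict Implicit. Unset Printing Implicit Defensive.

Definition simple_graph (T : finType) (e : rel T) : Prop :=
  symmetric e /\ irreflexive e.

Section Defs.
Variables (T : finType) (e : rel T).

Definition proper_col_on (S : {set T}) (k : nat) (c : T -> nat) : Prop :=
  (forall x, x \in S -> 1 <= c x <= k) /\
  (forall x y, x \in S -> y \in S -> e x y -> c x != c y).

Definition proper_kcol (S : {set T}) (k : nat) (c : T -> nat) : Prop :=
  proper_col_on S k c /\
  (forall i, 1 <= i <= k -> exists2 x, x \in S & c x = i).

Definition b_vertex (S : {set T}) (k : nat) (c : T -> nat) (v : T) : Prop :=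
  v \in S /\
  (forall j, 1 <= j <= k -> j != c v -> exists2 u, u \in S & e v u /\ c u = j).

Definition b_kcol (S : {set T}) (k : nat) (c : T -> nat) : Prop :=
  proper_kcol S k c /\
  (forall i, 1 <= i <= k -> exists v, b_vertex S k c v /\ c v = i).

Definition has_b_kcol (S : {set T}) (k : nat) : Prop :=
  exists c, b_kcol S k c.

Definition has_b_kcolb (S : {set T}) (k : nat) : bool :=
  if excluded_middle_informative (has_b_kcol S k) then true else false.

(* phi(G[S]) : the largest k with a b-k-colouring (necessarily k <= #|S| <= #|T|) *)
Definition bchrom (S : {set T}) : nat :=
  \max_(k < #|T|.+1 | has_b_kcolb S k) k.

Definition bchrom_r (S : {set T}) : nat :=
  \max_(S' : {set T} | S' \subset S) bchrom S'.

(* G[S] is a b-t-atom: classes D_i = {x in S | d x = i}, i = 1..t,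
   special vertices sp i in D_i *)
Definition b_atom (S : {set T}) (t : nat) : Prop :=
  exists (d : T -> nat) (sp : nat -> T),
    (forall x, x \in S -> 1 <= d x <= t) /\
    (forall i, 1 <= i <= t -> sp i \in S /\ d (sp i) = i) /\
    (forall x y, x \in S -> y \in S -> e x y -> d x != d y) /\
    (forall i, 1 <= i <= t -> #|[set x in S | d x == i]| <= t) /\
    (forall i j, 1 <= i <= t -> 1 <= j <= t -> i != j ->
        exists2 u, u \in S & d u = j /\ e (sp i) u).

Definition minimal_b_atom (S : {set T}) (t : nat) : Prop :=
  b_atom S t /\ (forall S' : {set T}, S' \proper S -> ~ b_atom S' t).

Definition nbhd (S : {set T}) : {set T} :=
  [set x | (x \notin S) && [exists y in S, e x y]].

Definition feasible (S : {set T}) (t : nat) : Prop :=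
  exists c, b_kcol S t c /\
    exists c', (forall x, x \in S -> c' x = c x) /\ proper_col_on (S :|: nbhd S) t c'.

End Defs.

From mathcomp Require Import all_boot.
From Stdlib Require Import Classical ClassicalEpsilon.
Set Implicit Arguments. Unset Strict Implicit. Unset Printing Implicit Defensive.

(* Let t = phi_r(G) > 0. An induced subgraph with a b-t-colouring contains a
   b-t-atom (its b-vertices and, for each pair of colours, one witness
   neighbour), hence G contains a minimal one A, and feasibility gives a
   b-t-colouring of A extending properly to A and N(A) with colours <= t. Give
   every other vertex its own colour above t and lower these colours one vertex
   x at a time. If every colour i <= t occurs on a neighbour of x that sees all
   other colours <= t, then x together with the vertices of colours <= t
   carries a b-(t+1)-colouring, contradicting phi_r(G) = t. Otherwise recolour
   x with such a colour i and give each neighbour of x of colour i a colour it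
   misses. Since x lies outside A and N(A), the colouring of A is kept and N(A)
   stays below t + 1, so at the end the colouring is a b-t-colouring of G. *)

Lemma choice_on (A B : Type) (b0 : B) (D : A -> Prop) (R : A -> B -> Prop) :
  (forall a, D a -> exists b, R a b) -> exists f, forall a, D a -> R a (f a).
Proof.
by move=> hR; exists (fun a => epsilon (inhabits b0) (R a)) => a /hR; apply: epsilon_spec.
Qed.

Section BChromaticNumber.
Variables (T : finType) (e : rel T).

Lemma proper_kcol_le_card S k c : proper_kcol e S k c -> k <= #|S|.
Proof.
case=> _ onto; rewrite -(size_iota 1 k) -(size_image c S).
apply: uniq_leq_size (iota_uniq 1 k) _ => i; rewrite mem_iota add1n ltnS => hi.
by have [x xS <-] := onto i hi; apply: image_f.
Qed.

Lemma has_b_kcolP S k : reflect (has_b_kcol e S k) (has_b_kcolb e S k).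
Proof. by rewrite /has_b_kcolb; case: excluded_middle_informative => h; constructor. Qed.

Lemma bchrom_max S k : has_b_kcol e S k -> k <= bchrom e S.
Proof.
move=> hk; have k_small : k < #|T|.+1.
  by case: hk => c [/proper_kcol_le_card leS _]; rewrite ltnS (leq_trans leS) ?max_card.
by apply: (leq_bigmax_cond (Ordinal k_small)); apply/has_b_kcolP.
Qed.

Lemma has_b_kcol_bchrom S : 0 < bchrom e S -> has_b_kcol e S (bchrom e S).
Proof.
rewrite /bchrom.
have [k0 hk0|none] := pickP (fun k : 'I_#|T|.+1 => has_b_kcolb e S k).
  by rewrite (bigmax_eq_arg _ hk0) => _; case: arg_maxnP => // k /has_b_kcolP.
by rewrite big_pred0.
Qed.

Lemma bchrom_le_bchrom_r (S S' : {set T}) :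
  S' \subset S -> bchrom e S' <= bchrom_r e S.
Proof. exact: leq_bigmax_cond. Qed.

Lemma bchrom_r_attained (S : {set T}) :
  exists2 S' : {set T}, S' \subset S & bchrom e S' = bchrom_r e S.
Proof.
by rewrite /bchrom_r (bigmax_eq_arg S) ?subxx //; case: arg_maxnP => // S' ? _; exists S'.
Qed.

Lemma b_kcol_has_atom S t c : 0 < t -> b_kcol e S t c -> exists A, b_atom e A t.
Proof.
move=> t_gt0 [[[_ c_proper] c_onto] c_bvert].
have [x0 _ _] := c_onto 1 t_gt0.
have [sp spP] := choice_on x0 c_bvert.
have [nb nbP] : exists nb : nat * nat -> T,
    forall ij, [/\ 0 < ij.1 <= t, 0 < ij.2 <= t & ij.1 != ij.2] ->
    [/\ nb ij \in S, e (sp ij.1) (nb ij) & c (nb ij) = ij.2].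
  apply: (choice_on x0 (R := fun ij u => [/\ u \in S, e (sp ij.1) u & c u = ij.2]))
    => -[i j] [/= hi hj ij]; have [[_ spb] spi] := spP i hi.
  have ji : j != c (sp i) by rewrite spi eq_sym.
  by have [u ? []] := spb j hj ji; exists u.
(* The diagonal [w i i] is the special vertex of colour [i], so the class of
   colour [j] is [{w i j | i}] and has at most [t] elements. *)
pose w i j := if i == j then sp i else nb (i, j).
have wP i j : 0 < i <= t -> 0 < j <= t ->
    [/\ w i j \in S, c (w i j) = j & i != j -> e (sp i) (w i j)].
  rewrite /w => hi hj; case: eqP => [<-|/eqP ij]; last by case: (nbP (i, j)).
  by have [[? _] ?] := spP i hi.
have ordS n : 0 < n <= t -> exists i : 'I_t, n = i.+1.
  by case: n => // n hn; exists (Ordinal hn).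
have ord_range (i : 'I_t) : 0 < i.+1 <= t by rewrite /= ltn_ord.
pose A := [set w i.+1 j.+1 | i : 'I_t, j : 'I_t].
have wA i j : 0 < i <= t -> 0 < j <= t -> w i j \in A.
  by move=> /ordS [i' ->] /ordS [j' ->]; apply/imset2P; exists i' j'.
have AP x : x \in A -> x \in S /\ 0 < c x <= t.
  by case/imset2P => i j _ _ ->; have [? -> _] := wP _ _ (ord_range i) (ord_range j).
exists A, c, sp; split; [|split; [|split; [|split]]].
- by move=> x /AP [].
- move=> i hi; split; last exact: (spP i hi).2.
  by have := wA i i hi hi; rewrite /w eqxx.
- by move=> x y /AP [xS _] /AP [yS _]; apply: c_proper.
- move=> j /ordS [j' ->]; apply: (@leq_trans #|[set w i.+1 j'.+1 | i : 'I_t]|).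
    apply: subset_leq_card; apply/subsetP => x.
    rewrite !inE => /andP [/imset2P [i k _ _ ->]].
    have [_ -> _] := wP _ _ (ord_range i) (ord_range k) => /eqP [/val_inj <-].
    exact: imset_f.
  by apply: leq_trans (leq_imset_card _ _) _; rewrite card_ord.
- move=> i j hi hj ij; have [_ wj wi] := wP i j hi hj.
  by exists (w i j); [apply: wA | split => //; apply: wi].
Qed.

Lemma minimal_b_atom_exists S t : b_atom e S t -> exists A, minimal_b_atom e A t.
Proof.
pose P B := if excluded_middle_informative (b_atom e B t) then true else false.
have PP B : P B <-> b_atom e B t by rewrite /P; case: excluded_middle_informative.
move=> /(PP S) PS; have [A /minsetP [/PP atomA minA]] := ex_minset (ex_intro P S PS).
exists A; split => // B ltBA /PP /minA /(_ (proper_sub ltBA)) eqBA.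
by move: ltBA; rewrite eqBA properxx.
Qed.

Section Recolouring.
Hypotheses (e_sym : symmetric e) (e_irr : irreflexive e).
Variable t : nat.

Lemma b_kcol_add_vertex f x :
    (forall y z, e y z -> f y != f z) -> t < f x ->
    (forall i, 0 < i <= t -> exists2 u, e x u & f u = i /\ b_vertex e [set: T] t f u) ->
  has_b_kcol e (x |: [set y | 0 < f y <= t]) t.+1.
Proof.
move=> f_proper fx_high witness; set S := x |: _.
pose d y := if y == x then t.+1 else f y; exists d.
have dx : d x = t.+1 by rewrite /d eqxx.
have S_cases y : y \in S -> y = x \/ 0 < f y <= t.
  by rewrite !inE => /orP [/eqP|]; [left | right].
have low y i : f y = i -> 0 < i <= t -> [/\ y \in S, y != x & d y = i].
  move=> <- hy; have yx : y != x.
    by apply: contraTneq hy => ->; rewrite (leqNgt (f x)) fx_high andbF.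
  by rewrite /d !inE (negbTE yx) hy orbT.
have below i : 0 < i <= t.+1 -> i != t.+1 -> 0 < i <= t.
  by case/andP => -> ile ine; rewrite -ltnS ltn_neqAle ine.
have bvert i : 0 < i <= t.+1 -> exists v, b_vertex e S t.+1 d v /\ d v = i.
  move=> hi; have [->|/(below i hi) {}hi] := eqVneq i t.+1.
    exists x; rewrite dx; split => //; split; first by rewrite !inE eqxx.
    rewrite dx => j hj /(below j hj) {}hj; have [u xu [fu _]] := witness j hj.
    by have [uS _ du] := low u j fu hj; exists u; rewrite ?du.
  have [u xu [fu [_ ubv]]] := witness i hi; have [uS ux du] := low u i fu hi.
  exists u; split => //; split => // j hj; rewrite du => ji.
  have [->|/(below j hj) {}hj] := eqVneq j t.+1.
    by exists x; rewrite ?inE ?eqxx // e_sym dx.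
  rewrite -fu in ji; have [w _ [uw fw]] := ubv j hj ji.
  by have [wS _ dw] := low w j fw hj; exists w; rewrite ?dw.
split; [split; [split|] | exact: bvert].
- move=> y /S_cases [->|hy]; first by rewrite dx leqnn.
  by have [_ _ ->] := low y _ erefl hy; case/andP: hy => -> /leqW.
- move=> y z /S_cases [->|hy] /S_cases [->|hz] yz; first by rewrite e_irr in yz.
  + by have [_ _ ->] := low z _ erefl hz; rewrite dx eq_sym ltn_eqF // ltnS; case/andP: hz.
  + by have [_ _ ->] := low y _ erefl hy; rewrite dx ltn_eqF // ltnS; case/andP: hy.
  + by have [_ _ ->] := low y _ erefl hy; have [_ _ ->] := low z _ erefl hz; apply: f_proper.
- by move=> i /bvert [v [[vS _] dv]]; exists v.
Qed.

Lemma b_vertex_or_missing_colour f u :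
  b_vertex e [set: T] t f u \/
  exists j, [/\ 0 < j <= t, j != f u & forall w, e u w -> f w != j].
Proof.
have [[j hj]|none] :=
  classic (exists j, [/\ 0 < j <= t, j != f u & forall w, e u w -> f w != j]).
  by right; exists j.
left; split => [|j hj ju]; first by rewrite inE.
apply: NNPP => nw; apply: none; exists j; split => // w uw; apply/eqP => fw.
by apply: nw; exists w; rewrite ?inE.
Qed.

Lemma b_witnesses_or_missing_colour f x :
  (forall i, 0 < i <= t -> exists2 u, e x u & f u = i /\ b_vertex e [set: T] t f u) \/
  exists2 i, 0 < i <= t & forall u, e x u -> f u = i ->
    exists j, [/\ 0 < j <= t, j != i & forall w, e u w -> f w != j].
Proof.
have [[i hi none]|all_b] := classic (exists2 i, 0 < i <= t &
    forall u, e x u -> f u = i -> ~ b_vertex e [set: T] t f u).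
  right; exists i => // u xu fu.
  case: (b_vertex_or_missing_colour f u) => [/(none u xu fu) //|[j]].
  by rewrite fu; exists j.
left => i hi; apply: NNPP => no_u; apply: all_b; exists i => // u xu fu bu.
by apply: no_u; exists u.
Qed.

Lemma recolour_step f x i :
    (forall y z, e y z -> f y != f z) -> 0 < i <= t ->
    (forall u, e x u -> f u = i ->
      exists j, [/\ 0 < j <= t, j != i & forall w, e u w -> f w != j]) ->
  exists g, [/\ forall y z, e y z -> g y != g z, g x = i,
    forall y, y != x -> ~~ e x y -> g y = f y & forall y, g y = f y \/ 0 < g y <= t].
Proof.
move=> f_proper hi missing; pose N u := e x u && (f u == i).
have [m mP] : exists m : T -> nat, forall u, N u ->
    [/\ 0 < m u <= t, m u != i & forall w, e u w -> f w != m u].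
  apply: (choice_on 0 (R := fun u j => [/\ 0 < j <= t, j != i & forall w, e u w -> f w != j])).
  by move=> u /andP [xu /eqP]; apply: missing.
pose g y := if y == x then i else if N y then m y else f y.
have gx : g x = i by rewrite /g eqxx.
have g_off y : y != x -> g y = if N y then m y else f y by rewrite /g => /negbTE ->.
have nbr_x z : z != x -> e x z -> g z != i.
  move=> zx xz; rewrite g_off //; case: ifP => [Nz|]; first by case: (mP z Nz).
  by rewrite /N xz => /negbT.
exists g; split => //.
- move=> y z yz; have [yx|yx] := eqVneq y x.
    have zx : z != x by apply: contraTneq yz => ->; rewrite yx e_irr.
    by rewrite yx gx eq_sym nbr_x // -yx.
  have [zx|zx] := eqVneq z x; first by rewrite zx gx nbr_x // e_sym -zx.
  rewrite !g_off //; case: ifP => [Ny|_]; case: ifP => [Nz|_].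
  + move: Ny Nz (f_proper y z yz) => /andP [_ /eqP ->] /andP [_ /eqP ->].
    by rewrite eqxx.
  + by case: (mP y Ny) => _ _ /(_ z yz); rewrite eq_sym.
  + by case: (mP z Nz) => _ _; apply; rewrite e_sym.
  + exact: f_proper.
- by move=> y yx xy; rewrite g_off // /N (negbTE xy).
- move=> y; have [->|yx] := eqVneq y x; first by rewrite gx; right.
  by rewrite g_off //; case: ifP => [/mP [] m_range _ _|_]; [right | left].
Qed.

Definition high (f : T -> nat) : {set T} := [set y | t < f y].

Section Anchored.
Variables (A : {set T}) (cA : T -> nat).
Hypothesis cA_b : b_kcol e A t cA.

Definition anchored (f : T -> nat) :=
  [/\ forall y, 0 < f y, forall y z, e y z -> f y != f z,
      {in A, forall y, f y = cA y} & {in nbhd e A, forall y, f y <= t}].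

Lemma feasible_anchored c' :
    {in A, forall y, c' y = cA y} -> proper_col_on e (A :|: nbhd e A) t c' ->
  exists f, anchored f.
Proof.
move=> c'A [c'_range c'_proper].
pose f y := if y \in A :|: nbhd e A then c' y else t.+1 + enum_rank y.
exists f; split.
- by move=> y; rewrite /f; case: ifP => [/c'_range /andP [] //|_]; rewrite addSn.
- move=> y z yz; rewrite /f; case: ifP => yU; case: ifP => zU.
  + exact: c'_proper.
  + by rewrite ltn_eqF // ltn_addr // ltnS; case/andP: (c'_range y yU).
  + by rewrite eq_sym ltn_eqF // ltn_addr // ltnS; case/andP: (c'_range z zU).
  + rewrite eqn_add2l; apply: contraTneq yz => /val_inj /enum_rank_inj ->.
    by rewrite e_irr.
- by move=> y yA; rewrite /f inE yA c'A.
- move=> y yN; have yU : y \in A :|: nbhd e A by rewrite inE yN orbT.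
  by rewrite /f yU; case/andP: (c'_range y yU).
Qed.

Lemma anchored_high_far f x :
  anchored f -> t < f x -> x \notin A /\ {in A, forall y, ~~ e x y}.
Proof.
have [[[cA_range _] _] _] := cA_b; case=> _ _ fA fN fx.
have xA : x \notin A.
  by apply: contraTN fx => xA; rewrite -leqNgt fA //; case/andP: (cA_range x xA).
split=> // y yA; apply: contraTN fx => xy; rewrite -leqNgt fN // inE xA /=.
by apply/existsP; exists y; rewrite yA.
Qed.

Lemma anchored_low_b_kcol f : anchored f -> (forall y, f y <= t) -> b_kcol e [set: T] t f.
Proof.
have [[_ cA_onto] cA_bvert] := cA_b; case=> f_pos f_proper fA _ f_low.
split; [split; [split|]|].
- by move=> y _; rewrite f_pos f_low.
- by move=> y z _ _; apply: f_proper.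
- by move=> i /cA_onto [y yA cy]; exists y; rewrite ?inE ?fA.
- move=> i /cA_bvert [v [[vA vbv] cv]]; exists v; split; last by rewrite fA.
  split=> [|j hj]; first by rewrite inE.
  rewrite fA // => /(vbv j hj) [u uA [vu cu]].
  by exists u; rewrite ?inE ?fA.
Qed.

Hypothesis no_b_kcol_above : forall S, ~ has_b_kcol e S t.+1.

Lemma anchored_recolour f x :
  anchored f -> t < f x -> exists g, anchored g /\ high g \proper high f.
Proof.
move=> fa fx; have [f_pos f_proper fA fN] := fa.
have [xA xfar] := anchored_high_far fa fx.
case: (b_witnesses_or_missing_colour f x) => [witness|[i hi missing]].
  by case: (no_b_kcol_above (b_kcol_add_vertex f_proper fx witness)).
have [g [g_proper gx g_far g_low]] := recolour_step f_proper hi missing.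
have g_high y : t < g y -> g y = f y.
  by case: (g_low y) => // /andP [_ gy]; rewrite ltnNge gy.
exists g; split; first split.
- by move=> y; case: (g_low y) => [->|/andP []].
- exact: g_proper.
- move=> y yA; rewrite g_far ?fA ?xfar //.
  by apply: contraTneq yA => ->.
- by move=> y yN; case: (g_low y) => [->|/andP [] //]; apply: fN.
- apply/properP; split.
    by apply/subsetP => y; rewrite !inE => hy; rewrite -(g_high y hy).
  by exists x; rewrite !inE ?fx // gx -leqNgt; case/andP: hi.
Qed.

Lemma anchored_has_b_kcol f : anchored f -> has_b_kcol e [set: T] t.
Proof.
have [n] := ubnP #|high f|; elim: n f => // n IH f lt_n fa.
case: (set_0Vmem (high f)) => [high0|[x]].
  exists f; apply: anchored_low_b_kcol => // y; have := in_set0 y.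
  by rewrite -high0 inE => /negbT; rewrite -leqNgt.
rewrite inE => /(anchored_recolour fa) [g [ga lt_gf]].
by apply: (IH g) => //; apply: leq_trans (proper_card lt_gf) _.
Qed.

End Anchored.
End Recolouring.
End BChromaticNumber.

Theorem mainTheorem9 (T : finType) (e : rel T) :
  simple_graph e ->
  let t := bchrom_r e [set: T] in
  (forall S : {set T}, minimal_b_atom e S t -> feasible e S t) ->
  bchrom e [set: T] = bchrom_r e [set: T].
Proof.
move=> [e_sym e_irr] t feasible_atoms.
apply/eqP; rewrite eqn_leq bchrom_le_bchrom_r ?subsetT //= -/t.
have no_b_kcol_above S : ~ has_b_kcol e S t.+1.
  by move/bchrom_max; rewrite ltnNge bchrom_le_bchrom_r ?subsetT.
have [S0 _ S0_max] := bchrom_r_attained e [set: T]; rewrite -/t in S0_max.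
have [->|t_gt0] := posnP t; first by [].
have [c S0_col] : has_b_kcol e S0 t.
  by rewrite -S0_max; apply: has_b_kcol_bchrom; rewrite S0_max.
have [_ /minimal_b_atom_exists [A A_min]] := b_kcol_has_atom t_gt0 S0_col.
have [cA [cA_b [c' [c'A c'_col]]]] := feasible_atoms A A_min.
have [f f_anch] := feasible_anchored e_irr c'A c'_col.
exact/bchrom_max/(anchored_has_b_kcol e_sym e_irr cA_b no_b_kcol_above f_anch).
Qed.
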